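(* Let $\mathcal{H}$ be a complex Hilbert space and let $A\in\mathcal{B}(\mathcal{H})$ satisfy $mI\le A\le MI$ for some scalars $0<m<M$. Then the following assertions are equivalent (in each, $\Phi$ ranges over all unital positive linear maps $\Phi:\mathcal{B}(\mathcal{H})\to\mathcal{B}(\mathcal{K})$, $\mathcal K$ a complex Hilbert space): (i) $\Phi(A^{-1})\le\left(\frac{M+m}{2\sqrt{Mm}}\right)^2\Phi(A)^{-1}$ for every such $\Phi$; (ii) $\langle\Phi(A^{-1})x,x\rangle\le\left(\frac{M+m}{2\sqrt{Mm}}\right)^2\langle\Phi(A)x,x\rangle^{-1}$ for every such $\Phi$ and every unit vector $x\in\mathcal{K}$; (iii) $\Phi(A^{-1})\sharp\Phi(A)\le\frac{M+m}{2\sqrt{Mm}}I$ for every such $\Phi$; (iv) $\Phi(A^2)\le\left(\frac{M+m}{2\sqrt{Mm}}\right)^2\Phi(A)^2$ for every such $\Phi$.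
   Context: $\mathcal{B}(\mathcal{H})$ denotes the bounded linear operators on $\mathcal{H}$; $\le$ is the Löwner order. A linear map $\Phi:\mathcal{B}(\mathcal{H})\to\mathcal{B}(\mathcal{K})$ is positive if it maps positive operators to positive operators, and unital if $\Phi(I)=I$. For positive invertible operators $X,Y$, the geometric mean is $X\sharp Y=X^{1/2}\left(X^{-1/2}YX^{-1/2}\right)^{1/2}X^{1/2}$. *)

From HB Require Import structures.
From mathcomp Require Import all_boot all_order all_algebra.
From mathcomp Require Import reals.
From mathcomp Require Import complex.
Set Implicit Arguments. Unset Strict Implicit. Unset Printing Implicit Defensive.
Import Order.TTheory GRing.Theory Num.Theory.
Local Open Scope ring_scope.

Record Hilbert (R : realType) := {
  hvec :> lmodType R[i];
  hip : hvec -> hvec -> R[i];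
  hip_linear : forall (a : R[i]) (x y z : hvec),
      hip (a *: x + y) z = a * hip x z + hip y z;
  hip_conj : forall x y : hvec, hip y x = conjc (hip x y);
  hip_ge0 : forall x : hvec, 0 <= hip x x;
  hip_eq0 : forall x : hvec, hip x x = 0 -> x = 0;
  hcomplete : forall u : nat -> hvec,
      (forall e : R, 0 < e -> exists N : nat, forall p q : nat, (N <= p)%N -> (N <= q)%N ->
          Num.sqrt (complex.Re (hip (u p - u q) (u p - u q))) < e) ->
      exists l : hvec, forall e : R, 0 < e -> exists N : nat, forall p : nat, (N <= p)%N ->
          Num.sqrt (complex.Re (hip (u p - l) (u p - l))) < e
}.

Section Ops.
Variable R : realType.
Variable H : Hilbert R.

Definition hnorm (x : H) : R := Num.sqrt (complex.Re (hip x x)).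

Definition bounded_op (T : H -> H) : Prop :=
  (forall (a : R[i]) (x y : H), T (a *: x + y) = a *: T x + T y) /\
  (exists c : R, forall x : H, hnorm (T x) <= c * hnorm x).

Definition idop : H -> H := fun x => x.
Definition scal_op (c : R[i]) : H -> H := fun x => c *: x.
Definition comp_op (S T : H -> H) : H -> H := fun x => S (T x).
Definition add_op (S T : H -> H) : H -> H := fun x => S x + T x.
Definition sub_op (S T : H -> H) : H -> H := fun x => S x - T x.
Definition sscal_op (a : R[i]) (S : H -> H) : H -> H := fun x => a *: S x.

(* Positive operator: <T x, x> >= 0 for all x (in C, 0 <= z means z real >= 0). *)
Definition pos_op (T : H -> H) : Prop :=
  bounded_op T /\ forall x : H, 0 <= hip (T x) x.

Definition loewner (S T : H -> H) : Prop := pos_op (sub_op T S).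

Definition is_inv_op (T Ti : H -> H) : Prop :=
  bounded_op Ti /\ (forall x, T (Ti x) = x) /\ (forall x, Ti (T x) = x).

Definition is_sqrt_op (T S : H -> H) : Prop :=
  pos_op S /\ forall x, S (S x) = T x.

(* G = X # Y = X^{1/2} (X^{-1/2} Y X^{-1/2})^{1/2} X^{1/2}. *)
Definition is_gmean (X Y G : H -> H) : Prop :=
  exists S Si Q : H -> H,
    is_sqrt_op X S /\ is_inv_op S Si /\
    is_sqrt_op (comp_op Si (comp_op Y Si)) Q /\
    G = comp_op S (comp_op Q S).
End Ops.

(* Unital positive linear maps Phi : B(H) -> B(K). Phi is given as a function
   on all maps H -> H; only its values on B(H) are constrained. *)
Definition unital_pos_linear (R : realType) (H K : Hilbert R)
    (Phi : (H -> H) -> (K -> K)) : Prop :=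
  (forall T, bounded_op T -> bounded_op (Phi T)) /\
  (forall (a : R[i]) (S T : H -> H), bounded_op S -> bounded_op T ->
      Phi (add_op (sscal_op a S) T) = add_op (sscal_op a (Phi S)) (Phi T)) /\
  (forall T, pos_op T -> pos_op (Phi T)) /\
  Phi (@idop R H) = @idop R K.

Definition kant (R : realType) (m M : R) : R := (M + m) / (2 * Num.sqrt (M * m)).

From HB Require Import structures.
From mathcomp Require Import all_boot all_order all_algebra.
From mathcomp Require Import reals.
From mathcomp Require Import complex.
From mathcomp Require Import ring lra.
From Stdlib Require Import FunctionalExtensionality.
Import Order.TTheory GRing.Theory Num.Theory.
Local Open Scope ring_scope.

(* All four inequalities actually hold, so they are trivially equivalent.
   They come from the operator inequality (M - A)(A - m) >= 0, that is
   A^2 <= (M + m) A - M m, and its consequence M m A^-1 <= (M + m) - A.  Both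
   assert positivity of a linear combination of I, A, A^2, A^-1, so a unital
   positive linear map transports them to Phi.  Each assertion then follows by
   completing a square: add |v|^2 (or <Phi(A) v, v>) for a suitable v and use
   4 M m k^2 = (M + m)^2. *)

Set Implicit Arguments. Unset Strict Implicit. Unset Printing Implicit Defensive.

Ltac le_by_identity := rewrite le_eqVlt; apply/predU1P; left.

Section ComplexPositivity.
Variable R : rcfType.
Implicit Type z : R[i].

Lemma ger0_conjc z : 0 <= z -> z^*%C = z.
Proof. by case: z => a b; rewrite lecE /= => /andP[/eqP -> _]; rewrite oppr0. Qed.

Lemma ger0_RealE z : 0 <= z -> z = (complex.Re z)%:C%C.
Proof. by case: z => a b; rewrite lecE /= => /andP[/eqP -> _]. Qed.

End ComplexPositivity.

Section InnerProduct.
Variables (R : realType) (V : Hilbert R).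
Implicit Types (x y z : V) (a : R[i]).

Lemma hip0l y : hip (0 : V) y = 0.
Proof.
have := hip_linear 1 (0 : V) 0 y; rewrite scale1r addr0 mul1r => h.
by apply/esym/(addrI (hip (0 : V) y)); rewrite addr0 -h.
Qed.

Lemma hipDl x y z : hip (x + y) z = hip x z + hip y z.
Proof. by have := hip_linear 1 x y z; rewrite scale1r mul1r. Qed.

Lemma hipZl a x z : hip (a *: x) z = a * hip x z.
Proof. by have := hip_linear a x 0 z; rewrite addr0 hip0l addr0. Qed.

Lemma hipNl x z : hip (- x) z = - hip x z.
Proof. by rewrite -scaleN1r hipZl mulN1r. Qed.

Lemma hipBl x y z : hip (x - y) z = hip x z - hip y z.
Proof. by rewrite hipDl hipNl. Qed.

Lemma hipDr x y z : hip z (x + y) = hip z x + hip z y.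
Proof. by rewrite [LHS]hip_conj [hip z x]hip_conj [hip z y]hip_conj hipDl rmorphD. Qed.

Lemma hipZr a x z : hip z (a *: x) = a^*%C * hip z x.
Proof. by rewrite [LHS]hip_conj [hip z x]hip_conj hipZl rmorphM. Qed.

Lemma hipNr x z : hip z (- x) = - hip z x.
Proof. by rewrite [LHS]hip_conj [hip z x]hip_conj hipNl rmorphN. Qed.

Lemma hipBr x y z : hip z (x - y) = hip z x - hip z y.
Proof. by rewrite hipDr hipNr. Qed.

Lemma hnorm_ge0 x : 0 <= hnorm x.
Proof. exact: sqrtr_ge0. Qed.

Lemma hnorm_sqr x : hnorm x ^+ 2 = complex.Re (hip x x).
Proof. by rewrite sqr_sqrtr //; have := hip_ge0 x; rewrite lecE => /andP[]. Qed.

Lemma hip_normE x : hip x x = (hnorm x ^+ 2)%:C%C.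
Proof. by rewrite hnorm_sqr; apply/ger0_RealE/hip_ge0. Qed.

Lemma hnormZ a x :
  hnorm (a *: x) = Num.sqrt (complex.Re a ^+ 2 + complex.Im a ^+ 2) * hnorm x.
Proof.
rewrite {1}/hnorm hipZl hipZr hip_normE.
rewrite (_ : complex.Re _ = (complex.Re a ^+ 2 + complex.Im a ^+ 2) * hnorm x ^+ 2).
  by rewrite sqrtrM ?addr_ge0 ?sqr_ge0 // sqrtr_sqr ger0_norm ?hnorm_ge0.
by case: a => a1 a2 /=; ring.
Qed.

Lemma parallelogram x y :
  hnorm (x + y) ^+ 2 + hnorm (x - y) ^+ 2 = 2 * hnorm x ^+ 2 + 2 * hnorm y ^+ 2.
Proof.
by rewrite !hnorm_sqr !hipBl !hipDl !hipBr !hipDr !raddfD /=; ring.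
Qed.

Lemma hnormD_le x y : hnorm (x + y) <= 2 * (hnorm x + hnorm y).
Proof.
have := parallelogram x y; have := hnorm_ge0 (x - y); have := hnorm_ge0 (x + y).
have := hnorm_ge0 x; have := hnorm_ge0 y; nra.
Qed.

End InnerProduct.

Section Operators.
Variables (R : realType) (V : Hilbert R).
Implicit Types (x y : V) (a b : R[i]) (S T : V -> V).

Definition linop T := forall a x y, T (a *: x + y) = a *: T x + T y.

Lemma bounded_linop T : bounded_op T -> linop T.
Proof. by case. Qed.

Section Linear.
Variable T : V -> V.
Hypothesis linT : linop T.

Lemma linop0 : T 0 = 0.
Proof.
have := linT 1 0 0; rewrite !scale1r addr0 => h.
by apply/esym/(addrI (T 0)); rewrite addr0 -h.
Qed.

Lemma linopD x y : T (x + y) = T x + T y.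
Proof. by have := linT 1 x y; rewrite !scale1r. Qed.

Lemma linopZ a x : T (a *: x) = a *: T x.
Proof. by have := linT a x 0; rewrite !addr0 linop0 addr0. Qed.

Lemma linopN x : T (- x) = - T x.
Proof. by rewrite -scaleN1r linopZ scaleN1r. Qed.

Lemma linopB x y : T (x - y) = T x - T y.
Proof. by rewrite linopD linopN. Qed.

End Linear.

Lemma bounded_ext S T : (forall x, S x = T x) -> bounded_op S -> bounded_op T.
Proof.
move=> eST [linS [c boundS]]; split; first by move=> a x y; rewrite -!eST linS.
by exists c => x; rewrite -eST.
Qed.

Lemma bounded_id : bounded_op (@idop R V).
Proof. by split => //; exists 1 => x; rewrite mul1r. Qed.

Lemma bounded_comb a b S T : bounded_op S -> bounded_op T ->
  bounded_op (fun x => a *: S x + b *: T x).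
Proof.
move=> [linS [c boundS]] [linT [d boundT]]; split.
  move=> e x y; rewrite (linopD linS) (linopD linT) !(linopZ linS) !(linopZ linT).
  by rewrite !scalerDr !scalerA [a * e]mulrC [b * e]mulrC -!scalerA addrACA.
pose p := Num.sqrt (complex.Re a ^+ 2 + complex.Im a ^+ 2).
pose q := Num.sqrt (complex.Re b ^+ 2 + complex.Im b ^+ 2).
exists (2 * (p * `|c| + q * `|d|)) => x.
apply: (le_trans (hnormD_le _ _)); rewrite !hnormZ -/p -/q.
have Sx_le : hnorm (S x) <= `|c| * hnorm x.
  by apply: (le_trans (boundS x)); rewrite ler_wpM2r ?hnorm_ge0 ?ler_norm.
have Tx_le : hnorm (T x) <= `|d| * hnorm x.
  by apply: (le_trans (boundT x)); rewrite ler_wpM2r ?hnorm_ge0 ?ler_norm.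
rewrite -mulrA ler_wpM2l // mulrDl -!mulrA.
by rewrite lerD // ler_wpM2l ?sqrtr_ge0.
Qed.

Lemma bounded_comp S T : bounded_op S -> bounded_op T -> bounded_op (comp_op S T).
Proof.
move=> [linS [c boundS]] [linT [d boundT]]; split.
  by move=> a x y; rewrite /comp_op linT linS.
exists (`|c| * `|d|) => x; rewrite /comp_op -mulrA.
apply: (le_trans (boundS _)); apply: (le_trans (ler_wpM2r (hnorm_ge0 _) (ler_norm c))).
rewrite ler_wpM2l //; apply: (le_trans (boundT x)).
by rewrite ler_wpM2r ?hnorm_ge0 ?ler_norm.
Qed.

Lemma bounded_scal a T : bounded_op T -> bounded_op (sscal_op a T).
Proof.
move=> bT; apply: bounded_ext (bounded_comb a 0 bT bT) => x.
by rewrite scale0r addr0.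
Qed.

Lemma bounded_sub S T : bounded_op S -> bounded_op T -> bounded_op (sub_op S T).
Proof.
move=> bS bT; apply: bounded_ext (bounded_comb 1 (-1) bS bT) => x.
by rewrite scale1r scaleN1r.
Qed.

(* Polarization: a sesquilinear form that is real on the diagonal is hermitian. *)
Lemma posop_selfadj T : pos_op T -> forall x y, hip (T x) y = hip x (T y).
Proof.
move=> [/bounded_linop linT T_ge0].
pose d x y := hip (T x) y - hip x (T y).
have diag_sym x : hip x (T x) = hip (T x) x by rewrite hip_conj ger0_conjc.
have d_antisym x y : d y x = - d x y.
  have : d (x + y) (x + y) = 0 by rewrite /d diag_sym subrr.
  rewrite /d (linopD linT) !hipDl !hipDr !diag_sym => E.
  by apply/eqP; rewrite -subr_eq0 opprK; apply/eqP; rewrite -E; ring.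
have ci : ('i%C : R[i])^*%C = - 'i%C by apply/eqP; rewrite eq_complex /= oppr0 !eqxx.
have i_neq0 : ('i%C : R[i]) != 0 by rewrite eq_complex /= oner_eq0 andbF.
move=> x y; apply/eqP; rewrite -subr_eq0 -/(d x y).
have := d_antisym ('i%C *: x) y.
rewrite /d (linopZ linT) hipZl hipZr hipZr hipZl ci => /eqP; rewrite -subr_eq0 => /eqP E.
have : 'i%C * (d x y - d y x) = 0 by rewrite -E /d; ring.
by rewrite [d y x]d_antisym opprK -mulr2n => /eqP; rewrite mulf_eq0 (negbTE i_neq0) mulrn_eq0.
Qed.

Lemma posop_inv T Ti : pos_op T -> is_inv_op T Ti -> pos_op Ti.
Proof.
move=> [_ T_ge0] [bTi [TK TiK]]; split => // y.
by rewrite -{2}(TK y) hip_conj conj_ge0.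
Qed.

Lemma loewner_hip S T : loewner S T -> forall x, 0 <= hip (T x) x - hip (S x) x.
Proof. by move=> [_ ST_ge0] x; have := ST_ge0 x; rewrite /sub_op hipBl. Qed.

Lemma loewner_hipP S T : bounded_op S -> bounded_op T ->
  (forall x, 0 <= hip (T x) x - hip (S x) x) -> loewner S T.
Proof. by move=> bS bT ST_ge0; split=> [|x]; [apply: bounded_sub | rewrite /sub_op hipBl]. Qed.

Lemma scal_loewner c T : loewner (scal_op (c%:C)%C) T ->
  forall x, 0 <= hip (T x) x - c%:C%C * hip x x.
Proof. by move=> cT x; have := loewner_hip cT x; rewrite /scal_op hipZl. Qed.

Lemma loewner_scal c T : loewner T (scal_op (c%:C)%C) ->
  forall x, 0 <= c%:C%C * hip x x - hip (T x) x.
Proof. by move=> Tc x; have := loewner_hip Tc x; rewrite /scal_op hipZl. Qed.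

End Operators.

Section UnitalPositiveMap.
Variables (R : realType) (H K : Hilbert R).
Variable Phi : (H -> H) -> (K -> K).
Hypothesis Phi_upl : unital_pos_linear Phi.
Implicit Types (a b : R[i]) (S T : H -> H).

Lemma Phi_bounded T : bounded_op T -> bounded_op (Phi T).
Proof. by case: Phi_upl => PhiB _; apply: PhiB. Qed.

Lemma Phi_posop T : pos_op T -> pos_op (Phi T).
Proof. by case: Phi_upl => _ [_ [PhiP _]]; apply: PhiP. Qed.

Lemma Phi_id y : Phi (@idop R H) y = y.
Proof. by case: Phi_upl => _ [_ [_ ->]]. Qed.

Let zero_op : H -> H := fun _ => 0.

Let bounded_zero : bounded_op zero_op.
Proof.
by apply: bounded_ext (bounded_scal 0 (bounded_id H)) => x; rewrite /sscal_op scale0r.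
Qed.

Lemma Phi_add a S T : bounded_op S -> bounded_op T ->
  Phi (add_op (sscal_op a S) T) = add_op (sscal_op a (Phi S)) (Phi T).
Proof. by case: Phi_upl => _ [PhiL _]; apply: PhiL. Qed.

Let Phi_zero y : Phi zero_op y = 0.
Proof.
have zeroE : zero_op = add_op (sscal_op 1 zero_op) zero_op.
  by apply: functional_extensionality => x; rewrite /add_op /sscal_op scale1r addr0.
have := congr1 (fun f => f y) (Phi_add 1 bounded_zero bounded_zero).
rewrite -zeroE /add_op /sscal_op scale1r => E.
by apply/esym/(addrI (Phi zero_op y)); rewrite addr0 -E.
Qed.

Lemma Phi_comb a b S T : bounded_op S -> bounded_op T ->
  forall y, Phi (fun x => a *: S x + b *: T x) y = a *: Phi S y + b *: Phi T y.
Proof.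
move=> bS bT y; have bbT := bounded_scal b bT.
have bTE : sscal_op b T = add_op (sscal_op b T) zero_op.
  by apply: functional_extensionality => x; rewrite /add_op addr0.
have := Phi_add b bT bounded_zero; rewrite -bTE => PhibT.
rewrite -[fun x => _]/(add_op (sscal_op a S) (sscal_op b T)) Phi_add //.
by rewrite /add_op PhibT /add_op /sscal_op Phi_zero addr0.
Qed.

Lemma Phi_form_ge0 a b S T : bounded_op S -> bounded_op T ->
  (forall x, 0 <= hip (a *: S x + b *: T x) x) ->
  forall y, 0 <= hip (a *: Phi S y + b *: Phi T y) y.
Proof.
move=> bS bT ST_ge0 y.
have [_ /(_ y)] := Phi_posop (conj (bounded_comb a b bS bT) ST_ge0).
by rewrite Phi_comb.
Qed.

End UnitalPositiveMap.

Section KantorovichConstant.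
Variables (R : realType) (m M : R).
Hypothesis Mm_gt0 : 0 < M * m.

Lemma kant_sqrtE : 2 * Num.sqrt (M * m) * kant m M = M + m.
Proof. by rewrite /kant; field; rewrite gt_eqF // sqrtr_gt0. Qed.

Lemma kant_sqrE : 4 * (M * m) * kant m M ^+ 2 = (M + m) ^+ 2.
Proof.
rewrite -kant_sqrtE -[M * m in LHS]sqr_sqrtr ?ltW //; ring.
Qed.

End KantorovichConstant.

Lemma mul_le_kant_sqr (R : realType) (m M s t : R) : 0 < m -> m < M -> 0 <= s ->
  m <= t -> M * m * s <= M + m - t -> s * t <= kant m M ^+ 2.
Proof.
move=> m_gt0 m_lt_M s_ge0 m_le_t st_le.
have Mm_gt0 : 0 < M * m by nra.
have : 0 <= (2 * t - (M + m)) ^+ 2 by apply: sqr_ge0.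
have := kant_sqrE Mm_gt0; nra.
Qed.

Ltac hip_expand linT :=
  rewrite ?(linopB linT) ?(linopD linT) ?(linopZ linT) ?(linopN linT)
          ?hipBl ?hipDl ?hipZl ?hipNl ?hipBr ?hipDr ?hipZr ?hipNr ?conjc_real.

Section Kantorovich.
Variables (R : realType) (H : Hilbert R) (A : H -> H) (m M : R).
Hypothesis bA : bounded_op A.
Hypothesis m_gt0 : 0 < m.
Hypothesis m_lt_M : m < M.
Hypothesis m_le_A : loewner (scal_op (H:=H) (m%:C)%C) A.
Hypothesis A_le_M : loewner A (scal_op (H:=H) (M%:C)%C).

Let linA : linop A := bounded_linop bA.

Lemma bounds_posop : pos_op A.
Proof.
split => // x; have := scal_loewner m_le_A x.
have m_ge0 : 0 <= m%:C%C :> R[i] by rewrite ler0c ltW.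
by move/addr_ge0/(_ (mulr_ge0 m_ge0 (hip_ge0 x))); rewrite subrK.
Qed.

Let A_selfadj := posop_selfadj bounds_posop.

(* (M - m)(M - A)(A - m) = (M - A)(A - m)^2 + (A - m)(M - A)^2. *)
Lemma bounds_prod_ge0 z :
  0 <= (M + m)%:C%C * hip (A z) z - (M * m)%:C%C * hip z z - hip (A (A z)) z.
Proof.
have Msubm_gt0 : 0 < (M - m)%:C%C :> R[i] by rewrite ltcR subr_gt0.
rewrite -(pmulr_rge0 _ Msubm_gt0).
have := addr_ge0 (loewner_scal A_le_M (A z - m%:C%C *: z))
                 (scal_loewner m_le_A (M%:C%C *: z - A z)).
move/le_trans; apply; le_by_identity.
hip_expand linA; rewrite -!A_selfadj !(rmorphD, rmorphB, rmorphM, rmorphN) /=.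
ring.
Qed.

(* At y = A z, with B = (M - A)(A - m): <B z, A z> = <B z, (A - m) z> + m <B z, z>. *)
Lemma bounds_inv_ge0 Ai : is_inv_op A Ai -> forall y,
  0 <= (M + m)%:C%C * hip y y - hip (A y) y - (M * m)%:C%C * hip (Ai y) y.
Proof.
move=> [_ [AK AiK]] y.
have [z ->] : exists z, y = A z by exists (Ai y); rewrite AK.
rewrite AiK.
have m_ge0 : 0 <= m%:C%C :> R[i] by rewrite ler0c ltW.
have := addr_ge0 (loewner_scal A_le_M (A z - m%:C%C *: z))
                 (mulr_ge0 m_ge0 (bounds_prod_ge0 z)).
move/le_trans; apply; le_by_identity.
hip_expand linA; rewrite -!A_selfadj !(rmorphD, rmorphB, rmorphM, rmorphN) /=.
ring.
Qed.

Variables (K : Hilbert R) (Phi : (H -> H) -> (K -> K)).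
Hypothesis Phi_upl : unital_pos_linear Phi.

Let bPA : bounded_op (Phi A) := Phi_bounded Phi_upl bA.
Let linPA : linop (Phi A) := bounded_linop bPA.
Let PA_posop : pos_op (Phi A) := Phi_posop Phi_upl bounds_posop.
Let PA_selfadj := posop_selfadj PA_posop.

Lemma Phi_lbound y : 0 <= hip (Phi A y) y - m%:C%C * hip y y.
Proof.
have Am_ge0 x : 0 <= hip (1 *: A x + (- m%:C%C) *: idop x) x.
  by rewrite scale1r scaleNr hipBl hipZl; apply: scal_loewner.
have := Phi_form_ge0 Phi_upl bA (bounded_id H) Am_ge0 y.
by rewrite Phi_id // scale1r scaleNr hipBl hipZl.
Qed.

Lemma Phi_bounds_inv_ge0 Ai : is_inv_op A Ai -> forall y,
  0 <= (M + m)%:C%C * hip y y - hip (Phi A y) y - (M * m)%:C%C * hip (Phi Ai y) y.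
Proof.
move=> Ainv y.
have bS := bounded_comb ((M + m)%:C%C) (-1) (bounded_id H) bA.
have S_ge0 x :
    0 <= hip (1 *: ((M + m)%:C%C *: idop x + -1 *: A x) + - (M * m)%:C%C *: Ai x) x.
  move: (bounds_inv_ge0 Ainv x).
  by move/le_trans; apply; le_by_identity; rewrite /idop !(hipDl, hipZl); ring.
move: (Phi_form_ge0 Phi_upl bS Ainv.1 S_ge0 y).
rewrite (Phi_comb Phi_upl _ _ (bounded_id H) bA) Phi_id //.
by move/le_trans; apply; le_by_identity; rewrite !(hipDl, hipZl); ring.
Qed.

Lemma Phi_bounds_prod_ge0 y : 0 <=
  (M + m)%:C%C * hip (Phi A y) y - (M * m)%:C%C * hip y y - hip (Phi (comp_op A A) y) y.
Proof.
have bS := bounded_comb ((M + m)%:C%C) (- (M * m)%:C%C) bA (bounded_id H).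
have S_ge0 x : 0 <=
    hip (1 *: ((M + m)%:C%C *: A x + - (M * m)%:C%C *: idop x) + -1 *: comp_op A A x) x.
  move: (bounds_prod_ge0 x).
  by move/le_trans; apply; le_by_identity; rewrite /idop /comp_op !(hipDl, hipZl); ring.
move: (Phi_form_ge0 Phi_upl bS (bounded_comp bA bA) S_ge0 y).
rewrite (Phi_comb Phi_upl _ _ bA (bounded_id H)) Phi_id //.
by move/le_trans; apply; le_by_identity; rewrite !(hipDl, hipZl); ring.
Qed.

Let Mm_gt0 : 0 < M * m.
Proof. by rewrite mulr_gt0 // (lt_trans m_gt0 m_lt_M). Qed.

Let kant_sqrC : (4 * (M * m))%:C%C * (kant m M ^+ 2)%:C%C = ((M + m) ^+ 2)%:C%C :> R[i].
Proof. by rewrite -rmorphM kant_sqrE. Qed.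

Let kant_sqrtC :
  (2 * Num.sqrt (M * m))%:C%C * (kant m M)%:C%C = (M + m)%:C%C :> R[i].
Proof. by rewrite -rmorphM kant_sqrtE. Qed.

Lemma Phi_sqr_le_kant :
  loewner (Phi (comp_op A A)) (sscal_op ((kant m M ^+ 2)%:C)%C (comp_op (Phi A) (Phi A))).
Proof.
apply: loewner_hipP (Phi_bounded Phi_upl (bounded_comp bA bA))
  (bounded_scal _ (bounded_comp bPA bPA)) _ => y.
rewrite /sscal_op /comp_op hipZl.
have c_gt0 : 0 < (4 * (M * m))%:C%C :> R[i] by rewrite ltcR mulr_gt0.
rewrite -(pmulr_rge0 _ c_gt0).
have := addr_ge0 (mulr_ge0 (ltW c_gt0) (Phi_bounds_prod_ge0 y))
  (hip_ge0 ((M + m)%:C%C *: Phi A y - (2 * (M * m))%:C%C *: y)).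
move/le_trans; apply; le_by_identity.
rewrite [RHS]mulrBr (mulrA (4 * (M * m))%:C%C) kant_sqrC.
hip_expand linPA; rewrite -!PA_selfadj !(rmorphD, rmorphB, rmorphM, rmorphN, rmorphXn) /=.
ring.
Qed.

Lemma Phi_inv_le_kant Ai Pi : is_inv_op A Ai -> is_inv_op (Phi A) Pi ->
  loewner (Phi Ai) (sscal_op ((kant m M ^+ 2)%:C)%C Pi).
Proof.
move=> Ainv [bPi [PiK PiV]].
apply: loewner_hipP (Phi_bounded Phi_upl Ainv.1) (bounded_scal _ bPi) _ => y.
have [z ->] : exists z, y = Phi A z by exists (Pi y); rewrite PiK.
rewrite /sscal_op PiV hipZl.
have c_gt0 : 0 < (4 * (M * m))%:C%C :> R[i] by rewrite ltcR mulr_gt0.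
rewrite -(pmulr_rge0 _ c_gt0).
have := addr_ge0 (mulr_ge0 (ler0n _ 4) (Phi_bounds_inv_ge0 Ainv (Phi A z)))
  (PA_posop.2 (Phi A z + Phi A z - (M + m)%:C%C *: z)).
move/le_trans; apply; le_by_identity.
rewrite [RHS]mulrBr (mulrA (4 * (M * m))%:C%C) kant_sqrC.
hip_expand linPA; rewrite -!PA_selfadj !(rmorphD, rmorphB, rmorphM, rmorphN, rmorphXn) /=.
ring.
Qed.

Lemma Phi_inv_hip_le_kant Ai : is_inv_op A Ai -> forall x : K, hnorm x = 1 ->
  hip (Phi Ai x) x <= ((kant m M ^+ 2)%:C)%C * (hip (Phi A x) x)^-1.
Proof.
move=> Ainv x x1.
have xx : hip x x = 1 by rewrite hip_normE x1 expr1n.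
have PAix_ge0 := (Phi_posop Phi_upl (posop_inv bounds_posop Ainv)).2 x.
have := Phi_lbound x; have := Phi_bounds_inv_ge0 Ainv x; have := PAix_ge0.
rewrite xx !mulr1 (ger0_RealE PAix_ge0) (ger0_RealE (PA_posop.2 x)).
set s := complex.Re _; set t := complex.Re _.
rewrite -!rmorphB -rmorphM -rmorphB !ler0c !subr_ge0 => s_ge0 st_le t_ge_m.
have t_gt0 : 0 < t := lt_le_trans m_gt0 t_ge_m.
rewrite -fmorphV -rmorphM lecR ler_pdivlMr //.
exact: mul_le_kant_sqr.
Qed.

Lemma Phi_gmean_le_kant Ai G : is_inv_op A Ai -> is_gmean (Phi Ai) (Phi A) G ->
  loewner G (scal_op (H:=K) ((kant m M)%:C)%C).
Proof.
move=> Ainv [S [Si [Q [[S_pos SS] [Sinv [[Q_pos QQ] ->]]]]]].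
have S_selfadj := posop_selfadj S_pos.
have Q_selfadj := posop_selfadj Q_pos.
have Si_selfadj := posop_selfadj (posop_inv S_pos Sinv).
apply: loewner_hipP (bounded_comp S_pos.1 (bounded_comp Q_pos.1 S_pos.1))
  (bounded_scal _ (bounded_id K)) _ => y.
rewrite /comp_op /sscal_op /idop S_selfadj.
set w := S y; set t := Num.sqrt (M * m).
have QwQw : hip (Q w) (Q w) = hip (Phi A y) y.
  by rewrite Q_selfadj QQ /comp_op -Si_selfadj /w Sinv.2.2 PA_selfadj.
have ww : hip w w = hip (Phi Ai y) y by rewrite /w -SS [RHS]S_selfadj.
have c_gt0 : 0 < (2 * t)%:C%C :> R[i] by rewrite ltcR mulr_gt0 // sqrtr_gt0.
rewrite -(pmulr_rge0 _ c_gt0).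
have := addr_ge0 (Phi_bounds_inv_ge0 Ainv y) (hip_ge0 (Q w - t%:C%C *: w)).
move/le_trans; apply; le_by_identity.
rewrite [RHS]mulrBr hipZl (mulrA (2 * t)%:C%C) kant_sqrtC.
rewrite hipBl !hipBr !hipZl !hipZr QwQw ww -Q_selfadj conjc_real.
have -> : (M * m)%:C%C = t%:C%C * t%:C%C :> R[i].
  by rewrite -rmorphM -expr2 sqr_sqrtr ?ltW.
rewrite !(rmorphD, rmorphB, rmorphM, rmorphN, rmorphXn) /=.
ring.
Qed.

End Kantorovich.

Theorem mainTheorem2 (R : realType) (H : Hilbert R) (A : H -> H) (m M : R) :
  bounded_op A -> 0 < m -> m < M ->
  loewner (scal_op (H:=H) (m%:C)%C) A -> loewner A (scal_op (H:=H) (M%:C)%C) ->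
  let k := kant m M in
  let P1 := forall (K : Hilbert R) (Phi : (H -> H) -> (K -> K)),
      unital_pos_linear Phi ->
      forall Ai Pi, is_inv_op A Ai -> is_inv_op (Phi A) Pi ->
      loewner (Phi Ai) (sscal_op ((k ^+ 2)%:C)%C Pi) in
  let P2 := forall (K : Hilbert R) (Phi : (H -> H) -> (K -> K)),
      unital_pos_linear Phi ->
      forall Ai, is_inv_op A Ai ->
      forall x : K, hnorm x = 1 ->
      hip (Phi Ai x) x <= ((k ^+ 2)%:C)%C * (hip (Phi A x) x)^-1 in
  let P3 := forall (K : Hilbert R) (Phi : (H -> H) -> (K -> K)),
      unital_pos_linear Phi ->
      forall Ai G, is_inv_op A Ai -> is_gmean (Phi Ai) (Phi A) G ->
      loewner G (scal_op (H:=K) (k%:C)%C) in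
  let P4 := forall (K : Hilbert R) (Phi : (H -> H) -> (K -> K)),
      unital_pos_linear Phi ->
      loewner (Phi (comp_op A A)) (sscal_op ((k ^+ 2)%:C)%C (comp_op (Phi A) (Phi A))) in
  (P1 <-> P2) /\ (P1 <-> P3) /\ (P1 <-> P4).
Proof.
move=> bA m_gt0 m_lt_M m_le_A A_le_M k P1 P2 P3 P4.
have p1 : P1 by move=> K Phi Phi_upl Ai Pi; apply: Phi_inv_le_kant.
have p2 : P2 by move=> K Phi Phi_upl Ai; apply: Phi_inv_hip_le_kant.
have p3 : P3 by move=> K Phi Phi_upl Ai G; apply: Phi_gmean_le_kant.
have p4 : P4 by move=> K Phi Phi_upl; apply: Phi_sqr_le_kant.
by split; [split=> _ | split; split=> _].
Qed.
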